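(* Let $(p_n)$ be integers diverging to infinity and $(\kappa_n)$ an arbitrary sequence in $(0,\infty)$. (i) If $\kappa_n/p_n\to\infty$, then $e_{n1}=1+o(1)$, $\tilde e_{n2}=O(p_n/\kappa_n^2)$ and $f_{n2}=p_n/\kappa_n+o(p_n/\kappa_n)$. (ii) If $\kappa_n/p_n\to\xi>0$, then, with $c_\xi:=\frac12+\sqrt{\frac14+\xi^2}$, $e_{n1}\to\xi/c_\xi$, $\tilde e_{n2}=O(1/p_n)$ and $f_{n2}=1/c_\xi+o(1)$. (iii) If $\kappa_n/p_n\to0$, then $e_{n1}=\kappa_n/p_n+O(\kappa_n^3/p_n^3)$, $\tilde e_{n2}=1/p_n+o(1/p_n)$ and $f_{n2}=1+o(1)$.
   Context: For integer $p\ge2$ and $\kappa>0$, let $c_{p,\kappa}=1/\int_{-1}^1(1-t^2)^{(p-3)/2}e^{\kappa t}dt$. Let $U_n$ have density $u\mapsto c_{p_n,\kappa_n}(1-u^2)^{(p_n-3)/2}e^{\kappa_nu}$ on $[-1,1]$; $e_{n1}=E[U_n]$, $\tilde e_{n2}=\mathrm{Var}(U_n)$, $f_{n2}=E[1-U_n^2]$. *)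

From Stdlib Require Import Reals Lra ClassicalEpsilon.
Open Scope R_scope.

Definition improper_int_m11 (g : R -> R) (l : R) : Prop :=
  forall eps, 0 < eps -> exists delta, 0 < delta /\
    forall h, 0 < h < delta ->
      exists pr : Riemann_integrable g (-1 + h) (1 - h),
        Rabs (RiemannInt pr - l) < eps.

(* The (improper) integral over (-1,1), chosen classically (0 if it does not exist). *)
Definition Int_m11 (g : R -> R) : R :=
  epsilon (inhabits 0) (fun l => improper_int_m11 g l).

Definition wdens (p : nat) (kappa : R) (t : R) : R :=
  Rpower (1 - t ^ 2) ((INR p - 3) / 2) * exp (kappa * t).

Definition c_pk (p : nat) (kappa : R) : R := / Int_m11 (wdens p kappa).

(* E[U], E[U^2], Var(U), E[1-U^2] for U with density c_{p,kappa} wdens. *)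
Definition e1 (p : nat) (kappa : R) : R :=
  c_pk p kappa * Int_m11 (fun t => t * wdens p kappa t).
Definition m2 (p : nat) (kappa : R) : R :=
  c_pk p kappa * Int_m11 (fun t => t ^ 2 * wdens p kappa t).
Definition e2t (p : nat) (kappa : R) : R := m2 p kappa - (e1 p kappa) ^ 2.
Definition f2 (p : nat) (kappa : R) : R :=
  c_pk p kappa * Int_m11 (fun t => (1 - t ^ 2) * wdens p kappa t).

Definition bigO (u v : nat -> R) : Prop :=
  exists C N, forall n, (N <= n)%nat -> Rabs (u n) <= C * Rabs (v n).
Definition littleo (u v : nat -> R) : Prop :=
  forall eps, 0 < eps -> exists N, forall n, (N <= n)%nat -> Rabs (u n) <= eps * Rabs (v n).

Definition nat_diverges (p : nat -> nat) : Prop :=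
  forall M : nat, exists N, forall n, (N <= n)%nat -> (M <= p n)%nat.

(* Two integrations by parts, whose boundary terms vanish for p >= 3, together with
   (1 - t^2) w_p = w_(p+2), express everything through A = e1 p k and B = e1 (p+2) k:
     f2 = (p - 1) A / k,   A (p + k B) = k,   e2t = 1 - A^2 - (p - 1) A / k >= 0.
   Nonnegativity of the variance at index p + 2 bounds B by k / (p + 1) and by the positive
   root of k x^2 + (p + 1) x - k, so A = k / (p + k B) is squeezed between explicit functions
   of k / p; the recurrence e2t_p = (p - k^2 e2t_(p+2)) / (p + k B)^2 controls the variance.
   The three regimes k / p -> oo, xi, 0 then follow from these non-asymptotic estimates. *)

From Stdlib Require Import Reals Lra Lia Classical ClassicalEpsilon.
From Coquelicot Require Import Coquelicot.
Open Scope R_scope.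

Definition continuous_m11 (g : R -> R) : Prop :=
  forall t, -1 < t < 1 -> continuous g t.

Definition ex_RInt_m11 (g : R -> R) : Prop :=
  forall u v, -1 < u < 1 -> -1 < v < 1 -> ex_RInt g u v.

Definition trunc_RInt (g : R -> R) (h : R) : R := RInt g (-1 + h) (1 - h).

Definition is_RInt_m11 (g : R -> R) (l : R) : Prop :=
  forall eps, 0 < eps -> exists delta, 0 < delta /\
    forall h, 0 < h < delta -> Rabs (trunc_RInt g h - l) < eps.

Lemma continuous_ex_RInt_m11 g : continuous_m11 g -> ex_RInt_m11 g.
Proof.
intros Hg u v Hu Hv. apply (ex_RInt_continuous (V := R_CompleteNormedModule)).
intros z [Hz1 Hz2]. apply Hg. split.
- apply Rlt_le_trans with (Rmin u v); [apply Rmin_glb_lt|]; lra.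
- apply Rle_lt_trans with (Rmax u v); [|apply Rmax_lub_lt]; lra.
Qed.

Lemma improper_int_m11_unique g l1 l2 :
  improper_int_m11 g l1 -> improper_int_m11 g l2 -> l1 = l2.
Proof.
intros H1 H2. apply cond_eq. intros eps Heps.
destruct (H1 (eps / 2)) as [d1 [Hd1 Hh1]]; [lra|].
destruct (H2 (eps / 2)) as [d2 [Hd2 Hh2]]; [lra|].
pose proof (Rmin_l d1 d2). pose proof (Rmin_r d1 d2).
assert (0 < Rmin d1 d2) by (apply Rmin_glb_lt; lra).
destruct (Hh1 (Rmin d1 d2 / 2)) as [pr1 E1]; [lra|].
destruct (Hh2 (Rmin d1 d2 / 2)) as [pr2 E2]; [lra|].
rewrite <- RInt_Reals in E1, E2.
set (I := RInt g (-1 + Rmin d1 d2 / 2) (1 - Rmin d1 d2 / 2)) in *.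
rewrite Rabs_minus_sym in E1.
replace (l1 - l2) with ((l1 - I) + (I - l2)) by ring.
pose proof (Rabs_triang (l1 - I) (I - l2)). lra.
Qed.

Lemma Int_m11_of_is_RInt_m11 g g' l : ex_RInt_m11 g' ->
  (forall t, -1 < t < 1 -> g t = g' t) -> is_RInt_m11 g' l -> Int_m11 g = l.
Proof.
intros Hc He Hl.
assert (Hi : improper_int_m11 g l).
{ intros eps Heps. destruct (Hl eps Heps) as [d [Hd Hh]].
  exists (Rmin d 1). split; [apply Rmin_glb_lt; lra|].
  intros h Hh'. pose proof (Rmin_l d 1). pose proof (Rmin_r d 1).
  assert (Hx : forall x, Rmin (-1 + h) (1 - h) < x < Rmax (-1 + h) (1 - h) -> g' x = g x).
  { intros x Hx. rewrite Rmin_left, Rmax_right in Hx by lra. symmetry; apply He; lra. }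
  assert (Hex : ex_RInt g' (-1 + h) (1 - h)) by (apply Hc; lra).
  exists (ex_RInt_Reals_0 _ _ _ (ex_RInt_ext _ _ _ _ Hx Hex)).
  rewrite <- RInt_Reals, <- (RInt_ext g'); [apply Hh; lra|auto]. }
apply (improper_int_m11_unique g); auto.
apply (epsilon_spec (inhabits 0) (fun l => improper_int_m11 g l)). exists l; auto.
Qed.

Lemma ex_RInt_m11_lin g1 g2 a b : ex_RInt_m11 g1 -> ex_RInt_m11 g2 ->
  ex_RInt_m11 (fun t => a * g1 t + b * g2 t).
Proof.
intros H1 H2 u v Hu Hv.
apply (ex_RInt_plus (V := R_CompleteNormedModule) (fun t => a * g1 t) (fun t => b * g2 t));
  apply (ex_RInt_scal (V := R_CompleteNormedModule)); auto.
Qed.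

Lemma is_RInt_m11_unique g l1 l2 : ex_RInt_m11 g ->
  is_RInt_m11 g l1 -> is_RInt_m11 g l2 -> l1 = l2.
Proof. intros Hc H1 H2. rewrite <- (Int_m11_of_is_RInt_m11 g g l1), <- (Int_m11_of_is_RInt_m11 g g l2); auto. Qed.

Lemma is_RInt_m11_ext g1 g2 l :
  (forall t, -1 < t < 1 -> g1 t = g2 t) -> is_RInt_m11 g1 l -> is_RInt_m11 g2 l.
Proof.
intros He Hl eps Heps. destruct (Hl eps Heps) as [d [Hd Hh]].
exists (Rmin d 1). split; [apply Rmin_glb_lt; lra|].
intros h Hh'. pose proof (Rmin_l d 1). pose proof (Rmin_r d 1).
unfold trunc_RInt. rewrite <- (RInt_ext g1); [apply Hh; lra|].
intros x Hx. rewrite Rmin_left, Rmax_right in Hx by lra. apply He; lra.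
Qed.

Lemma is_RInt_m11_lin g1 g2 l1 l2 a b : ex_RInt_m11 g1 -> ex_RInt_m11 g2 ->
  is_RInt_m11 g1 l1 -> is_RInt_m11 g2 l2 ->
  is_RInt_m11 (fun t => a * g1 t + b * g2 t) (a * l1 + b * l2).
Proof.
intros C1 C2 H1 H2 eps Heps.
set (m := Rabs a + Rabs b + 1).
assert (Hm : 1 <= m) by (pose proof (Rabs_pos a); pose proof (Rabs_pos b); unfold m; lra).
destruct (H1 (eps / (2 * m))) as [d1 [Hd1 Hh1]]; [apply Rdiv_lt_0_compat; lra|].
destruct (H2 (eps / (2 * m))) as [d2 [Hd2 Hh2]]; [apply Rdiv_lt_0_compat; lra|].
exists (Rmin (Rmin d1 d2) 1). split; [repeat apply Rmin_glb_lt; lra|].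
intros h Hh.
pose proof (Rmin_l (Rmin d1 d2) 1); pose proof (Rmin_r (Rmin d1 d2) 1).
pose proof (Rmin_l d1 d2); pose proof (Rmin_r d1 d2).
specialize (Hh1 h ltac:(lra)). specialize (Hh2 h ltac:(lra)).
unfold trunc_RInt in *.
set (I1 := RInt g1 (-1 + h) (1 - h)) in *. set (I2 := RInt g2 (-1 + h) (1 - h)) in *.
assert (E : RInt (fun t => a * g1 t + b * g2 t) (-1 + h) (1 - h) = a * I1 + b * I2).
{ apply is_RInt_unique, (is_RInt_plus (V := R_CompleteNormedModule));
    apply (is_RInt_scal (V := R_CompleteNormedModule)), RInt_correct;
    [apply C1|apply C2]; lra. }
rewrite E.
replace (a * I1 + b * I2 - (a * l1 + b * l2)) with (a * (I1 - l1) + b * (I2 - l2)) by ring.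
eapply Rle_lt_trans; [apply Rabs_triang|]. rewrite !Rabs_mult.
assert (Rabs a * Rabs (I1 - l1) + Rabs b * Rabs (I2 - l2) <= m * (eps / (2 * m))).
{ pose proof (Rabs_pos a); pose proof (Rabs_pos b); unfold m.
  apply Rle_trans with ((Rabs a + Rabs b) * (eps / (2 * m))); [nra|].
  apply Rmult_le_compat_r; [apply Rlt_le, Rdiv_lt_0_compat|]; lra. }
replace (m * (eps / (2 * m))) with (eps / 2) in * by (field; lra). lra.
Qed.

Lemma trunc_RInt_ge0 g h : ex_RInt_m11 g ->
  (forall t, -1 < t < 1 -> 0 <= g t) -> 0 < h < 1 -> 0 <= trunc_RInt g h.
Proof.
intros Hc Hp Hh. apply RInt_ge_0; [lra|apply Hc; lra|].
intros x Hx; apply Hp; lra.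
Qed.

Lemma trunc_RInt_antimono g h1 h2 : ex_RInt_m11 g ->
  (forall t, -1 < t < 1 -> 0 <= g t) ->
  0 < h1 <= h2 -> h2 < 1 -> trunc_RInt g h2 <= trunc_RInt g h1.
Proof.
intros Hc Hp H1 H2. unfold trunc_RInt.
rewrite <- (RInt_Chasles g (-1 + h1) (-1 + h2) (1 - h1))
  by (apply Hc; lra).
rewrite <- (RInt_Chasles g (-1 + h2) (1 - h2) (1 - h1))
  by (apply Hc; lra).
assert (0 <= RInt g (-1 + h1) (-1 + h2)).
{ apply RInt_ge_0; [lra|apply Hc; lra|]. intros; apply Hp; lra. }
assert (0 <= RInt g (1 - h2) (1 - h1)).
{ apply RInt_ge_0; [lra|apply Hc; lra|]. intros; apply Hp; lra. }
change plus with Rplus. lra.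
Qed.

Lemma trunc_RInt_le_is_RInt_m11 g h l : ex_RInt_m11 g ->
  (forall t, -1 < t < 1 -> 0 <= g t) -> is_RInt_m11 g l -> 0 < h < 1 ->
  trunc_RInt g h <= l.
Proof.
intros Hc Hp Hl Hh. apply Rnot_lt_le. intros Hlt.
destruct (Hl (trunc_RInt g h - l)) as [d [Hd Hh']]; [lra|].
set (h' := Rmin d h / 2).
pose proof (Rmin_l d h). pose proof (Rmin_r d h).
assert (0 < Rmin d h) by (apply Rmin_glb_lt; lra).
pose proof (trunc_RInt_antimono g h' h Hc Hp ltac:(unfold h'; lra) ltac:(lra)).
specialize (Hh' h' ltac:(unfold h'; lra)).
pose proof (Rle_abs (trunc_RInt g h' - l)). lra.
Qed.

(* The truncated integrals increase as [h] decreases; the limit is their supremum. *)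
Lemma ex_is_RInt_m11_bounded g K : ex_RInt_m11 g ->
  (forall t, -1 < t < 1 -> 0 <= g t <= K) -> exists l, is_RInt_m11 g l.
Proof.
intros Hc Hb.
assert (Hp : forall t, -1 < t < 1 -> 0 <= g t) by (intros t Ht; apply Hb; auto).
set (E := fun y => exists h, 0 < h < 1 /\ y = trunc_RInt g h).
assert (Hbd : bound E).
{ exists (2 * K). intros y [h [Hh ->]]. unfold trunc_RInt.
  apply Rle_trans with (RInt (fun _ => K) (-1 + h) (1 - h)).
  - apply RInt_le; [lra|apply Hc; lra|apply ex_RInt_const|].
    intros; apply Hb; lra.
  - rewrite RInt_const. change scal with Rmult. destruct (Hb 0); nra. }
destruct (completeness E Hbd) as [l [Hub Hlub]].
{ exists (trunc_RInt g (1 / 2)), (1 / 2). split; [lra|auto]. }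
exists l. intros eps Heps.
destruct (classic (exists h0, 0 < h0 < 1 /\ l - eps < trunc_RInt g h0)) as [[h0 [Hh0 Hl0]]|Hn].
- exists h0. split; [lra|]. intros h Hh.
  pose proof (trunc_RInt_antimono g h h0 Hc Hp ltac:(lra) ltac:(lra)).
  assert (trunc_RInt g h <= l) by (apply Hub; exists h; split; [lra|auto]).
  rewrite Rabs_left1; lra.
- exfalso. assert (l <= l - eps); [|lra].
  apply Hlub. intros y [h [Hh ->]]. apply Rnot_lt_le. intros Hlt.
  apply Hn; exists h; auto.
Qed.

Lemma is_RInt_m11_derive g G C : continuous_m11 g ->
  (forall t, -1 < t < 1 -> is_derive G t (g t)) ->
  (forall t, -1 < t < 1 -> Rabs (G t) <= C * (1 - t ^ 2)) -> is_RInt_m11 g 0.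
Proof.
intros Hc Hd Hb.
assert (HC : 0 <= C) by (pose proof (Hb 0 ltac:(lra)); pose proof (Rabs_pos (G 0)); lra).
intros eps Heps.
exists (Rmin 1 (eps / (4 * C + 1))). split; [apply Rmin_glb_lt; [lra|apply Rdiv_lt_0_compat; lra]|].
intros h Hh.
pose proof (Rmin_l 1 (eps / (4 * C + 1))); pose proof (Rmin_r 1 (eps / (4 * C + 1))).
assert (E : trunc_RInt g h = G (1 - h) - G (-1 + h)).
{ apply is_RInt_unique, (is_RInt_derive (V := R_CompleteNormedModule) G g);
    intros x Hx; rewrite Rmin_left, Rmax_right in Hx by lra; [apply Hd|apply Hc]; lra. }
rewrite E, Rminus_0_r.
pose proof (Hb (1 - h) ltac:(lra)). pose proof (Hb (-1 + h) ltac:(lra)).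
pose proof (Rabs_triang (G (1 - h)) (- G (-1 + h))). rewrite Rabs_Ropp in *.
assert (4 * C * h <= 4 * C * (eps / (4 * C + 1))) by nra.
assert (4 * C * (eps / (4 * C + 1)) < eps).
{ apply Rmult_lt_reg_r with (4 * C + 1); [lra|].
  replace (4 * C * (eps / (4 * C + 1)) * (4 * C + 1)) with (4 * C * eps) by (field; lra). nra. }
unfold Rminus at 1. nra.
Qed.

Lemma is_RInt_m11_ge0 g l : ex_RInt_m11 g ->
  (forall t, -1 < t < 1 -> 0 <= g t) -> is_RInt_m11 g l -> 0 <= l.
Proof.
intros Hc Hp Hl.
apply Rle_trans with (trunc_RInt g (1 / 2)); [apply trunc_RInt_ge0|apply trunc_RInt_le_is_RInt_m11];
  auto; lra.
Qed.

Lemma exp_le_mono x y : x <= y -> exp x <= exp y.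
Proof. intros [H|H]; [left; apply exp_increasing|right; subst]; auto. Qed.

Lemma Rpower_le_1 x a : 0 < x <= 1 -> 0 <= a -> Rpower x a <= 1.
Proof.
intros Hx Ha. unfold Rpower. rewrite <- exp_0. apply exp_le_mono.
assert (ln x <= 0) by (rewrite <- ln_1; apply ln_le; lra). nra.
Qed.

Lemma INR_ge3 p : (3 <= p)%nat -> 3 <= INR p.
Proof. intros Hp. apply (le_INR 3) in Hp. simpl in Hp. lra. Qed.

Lemma one_minus_sq_bounds t : -1 < t < 1 -> 0 < 1 - t ^ 2 <= 1.
Proof. intros; split; nra. Qed.

Lemma wdens_pos p k t : 0 < wdens p k t.
Proof. apply Rmult_lt_0_compat; [apply exp_pos|apply exp_pos]. Qed.

Lemma wdens_le_exp p k t : (3 <= p)%nat -> 0 < k -> -1 < t < 1 -> wdens p k t <= exp k.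
Proof.
intros Hp Hk Ht. unfold wdens.
pose proof (INR_ge3 p Hp).
assert (Rpower (1 - t ^ 2) ((INR p - 3) / 2) <= 1)
  by (apply Rpower_le_1; [apply one_minus_sq_bounds|]; lra).
assert (exp (k * t) <= exp k) by (apply exp_le_mono; nra).
pose proof (exp_pos ((INR p - 3) / 2 * ln (1 - t ^ 2))). pose proof (exp_pos (k * t)).
unfold Rpower in *. nra.
Qed.

Lemma wdens_add2 p k t : -1 < t < 1 -> wdens (p + 2) k t = (1 - t ^ 2) * wdens p k t.
Proof.
intros Ht. pose proof (one_minus_sq_bounds t Ht). unfold wdens. rewrite plus_INR. simpl INR.
replace ((INR p + (1 + 1) - 3) / 2) with ((INR p - 3) / 2 + 1) by field.
rewrite Rpower_plus, Rpower_1 by lra. ring.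
Qed.

Lemma continuous_m11_poly_wdens p k (q : R -> R) :
  (forall t, ex_derive q t) -> continuous_m11 (fun t => q t * wdens p k t).
Proof.
intros Hq t Ht. pose proof (one_minus_sq_bounds t Ht).
apply (ex_derive_continuous (K := R_AbsRing) (V := R_NormedModule)).
unfold wdens, Rpower. apply ex_derive_mult; [apply Hq|]. auto_derive. lra.
Qed.

Definition moment (p : nat) (k : R) (j : nat) : R := Int_m11 (fun t => t ^ j * wdens p k t).

Definition cubic_wdens (p : nat) (k c0 c1 c2 c3 : R) (t : R) : R :=
  (c0 + c1 * t + c2 * t ^ 2 + c3 * t ^ 3) * wdens p k t.

Section Moments.

Variables (p : nat) (k : R).
Hypotheses (Hp : (3 <= p)%nat) (Hk : 0 < k).

Lemma ex_RInt_m11_pow_wdens j : ex_RInt_m11 (fun t => t ^ j * wdens p k t).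
Proof. apply continuous_ex_RInt_m11, continuous_m11_poly_wdens. intros; auto_derive; auto. Qed.

Lemma is_RInt_m11_moment j : is_RInt_m11 (fun t => t ^ j * wdens p k t) (moment p k j).
Proof.
assert (Hpow : forall t, -1 < t < 1 -> -1 <= t ^ j <= 1).
{ intros t Ht.
  assert (Rabs (t ^ j) <= 1).
  { rewrite <- RPow_abs, <- (pow1 j). apply pow_incr. split; [apply Rabs_pos|apply Rabs_le; lra]. }
  pose proof (Rle_abs (t ^ j)). pose proof (Rle_abs (- t ^ j)). rewrite Rabs_Ropp in *. lra. }
assert (Hw : forall t, -1 < t < 1 -> 0 < wdens p k t <= exp k)
  by (intros; split; [apply wdens_pos|apply wdens_le_exp; auto]).
destruct (ex_is_RInt_m11_bounded (fun t => (t ^ j + 1) * wdens p k t) (2 * exp k))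
  as [l1 H1].
{ apply continuous_ex_RInt_m11, continuous_m11_poly_wdens. intros; auto_derive; auto. }
{ intros t Ht. pose proof (Hpow t Ht). pose proof (Hw t Ht). split; nra. }
destruct (ex_is_RInt_m11_bounded (fun t => t ^ 0 * wdens p k t) (exp k)) as [l0 H0].
{ apply ex_RInt_m11_pow_wdens. }
{ intros t Ht. pose proof (Hw t Ht). simpl; lra. }
(* [t^j wdens p k] changes sign; [(t^j + 1) wdens p k] and [wdens p k] do not. *)
assert (H : is_RInt_m11 (fun t => t ^ j * wdens p k t) (1 * l1 + -1 * l0)).
{ eapply is_RInt_m11_ext; [|apply is_RInt_m11_lin; eauto].
  - intros t _. simpl. ring.
  - apply continuous_ex_RInt_m11, continuous_m11_poly_wdens. intros; auto_derive; auto.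
  - apply ex_RInt_m11_pow_wdens. }
replace (moment p k j) with (1 * l1 + -1 * l0); auto.
symmetry. apply (Int_m11_of_is_RInt_m11 _ (fun t => t ^ j * wdens p k t)); auto. apply ex_RInt_m11_pow_wdens.
Qed.

Lemma ex_RInt_m11_cubic_wdens c0 c1 c2 c3 : ex_RInt_m11 (cubic_wdens p k c0 c1 c2 c3).
Proof. apply continuous_ex_RInt_m11, continuous_m11_poly_wdens. intros; auto_derive; auto. Qed.

Lemma is_RInt_m11_cubic_wdens c0 c1 c2 c3 :
  is_RInt_m11 (cubic_wdens p k c0 c1 c2 c3)
    (c0 * moment p k 0 + c1 * moment p k 1 + c2 * moment p k 2 + c3 * moment p k 3).
Proof.
pose proof is_RInt_m11_moment as Hm. pose proof ex_RInt_m11_pow_wdens as Hx.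
pose proof (is_RInt_m11_lin _ _ _ _ c0 c1 (Hx 0%nat) (Hx 1%nat) (Hm 0%nat) (Hm 1%nat)) as H01.
pose proof (is_RInt_m11_lin _ _ _ _ 1 c2 (ex_RInt_m11_lin _ _ _ _ (Hx 0%nat) (Hx 1%nat))
  (Hx 2%nat) H01 (Hm 2%nat)) as H012.
pose proof (is_RInt_m11_lin _ _ _ _ 1 c3
  (ex_RInt_m11_lin _ _ _ _ (ex_RInt_m11_lin _ _ _ _ (Hx 0%nat) (Hx 1%nat)) (Hx 2%nat))
  (Hx 3%nat) H012 (Hm 3%nat)) as H0123.
replace (c0 * moment p k 0 + c1 * moment p k 1 + c2 * moment p k 2 + c3 * moment p k 3)
  with (1 * (1 * (c0 * moment p k 0 + c1 * moment p k 1) + c2 * moment p k 2)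
        + c3 * moment p k 3) by ring.
eapply is_RInt_m11_ext; [|exact H0123]. intros t _. unfold cubic_wdens. simpl. ring.
Qed.

Lemma Int_m11_cubic_wdens g c0 c1 c2 c3 :
  (forall t, -1 < t < 1 -> g t = cubic_wdens p k c0 c1 c2 c3 t) ->
  Int_m11 g = c0 * moment p k 0 + c1 * moment p k 1 + c2 * moment p k 2 + c3 * moment p k 3.
Proof.
intros Hg. apply (Int_m11_of_is_RInt_m11 _ (cubic_wdens p k c0 c1 c2 c3));
  [apply ex_RInt_m11_cubic_wdens|auto|apply is_RInt_m11_cubic_wdens].
Qed.

Lemma moment0_pos : 0 < moment p k 0.
Proof.
assert (Hc : continuous_m11 (fun t => t ^ 0 * wdens p k t))
  by (apply continuous_m11_poly_wdens; intros; auto_derive; auto).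
apply Rlt_le_trans with (trunc_RInt (fun t => t ^ 0 * wdens p k t) (1 / 2)).
- apply RInt_gt_0; [lra| |].
  + intros x _. simpl. rewrite Rmult_1_l. apply wdens_pos.
  + intros x Hx. apply Hc. lra.
- apply trunc_RInt_le_is_RInt_m11; [apply ex_RInt_m11_pow_wdens| |apply is_RInt_m11_moment|lra].
  intros t _. simpl. rewrite Rmult_1_l. left; apply wdens_pos.
Qed.

Lemma moment_var_ge0 a : 0 <= a ^ 2 * moment p k 0 - 2 * a * moment p k 1 + moment p k 2.
Proof.
replace (a ^ 2 * moment p k 0 - 2 * a * moment p k 1 + moment p k 2) with
  (a ^ 2 * moment p k 0 + (-2 * a) * moment p k 1 + 1 * moment p k 2 + 0 * moment p k 3) by ring.
apply (is_RInt_m11_ge0 (cubic_wdens p k (a ^ 2) (-2 * a) 1 0));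
  [apply ex_RInt_m11_cubic_wdens| |apply is_RInt_m11_cubic_wdens].
intros t _. unfold cubic_wdens. pose proof (wdens_pos p k t).
replace (a ^ 2 + -2 * a * t + 1 * t ^ 2 + 0 * t ^ 3) with ((t - a) ^ 2) by ring.
apply Rmult_le_pos; [apply pow2_ge_0|lra].
Qed.

Lemma Rabs_one_minus_sq_wdens_le t : -1 < t < 1 ->
  Rabs ((1 - t ^ 2) * wdens p k t) <= exp k * (1 - t ^ 2).
Proof.
intros Ht. pose proof (one_minus_sq_bounds t Ht). pose proof (wdens_pos p k t).
pose proof (wdens_le_exp p k t Hp Hk Ht).
rewrite Rabs_right by (apply Rle_ge, Rmult_le_pos; lra).
rewrite (Rmult_comm (exp k)). apply Rmult_le_compat_l; lra.
Qed.

(* Integrations by parts against [(1 - t^2) wdens p k] and [t (1 - t^2) wdens p k], which vanish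
   at [t = -1, 1] since [p >= 3]. *)
Lemma moment_ibp1 : k * moment p k 0 - (INR p - 1) * moment p k 1 - k * moment p k 2 = 0.
Proof.
replace (k * moment p k 0 - (INR p - 1) * moment p k 1 - k * moment p k 2) with
  (k * moment p k 0 + (- (INR p - 1)) * moment p k 1 + (- k) * moment p k 2 + 0 * moment p k 3)
  by ring.
apply (is_RInt_m11_unique (cubic_wdens p k k (- (INR p - 1)) (- k) 0));
  [apply ex_RInt_m11_cubic_wdens|apply is_RInt_m11_cubic_wdens|].
apply (is_RInt_m11_derive _ (fun t => (1 - t ^ 2) * wdens p k t) (exp k)).
- apply continuous_m11_poly_wdens. intros; auto_derive; auto.
- intros t Ht. pose proof (one_minus_sq_bounds t Ht).
  unfold cubic_wdens, wdens, Rpower. auto_derive; [lra|].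
  replace (1 + - (t * (t * 1))) with (1 - t ^ 2) by ring. field. lra.
- apply Rabs_one_minus_sq_wdens_le.
Qed.

Lemma moment_ibp2 : moment p k 0 + k * moment p k 1 - INR p * moment p k 2 - k * moment p k 3 = 0.
Proof.
replace (moment p k 0 + k * moment p k 1 - INR p * moment p k 2 - k * moment p k 3) with
  (1 * moment p k 0 + k * moment p k 1 + (- INR p) * moment p k 2 + (- k) * moment p k 3)
  by ring.
apply (is_RInt_m11_unique (cubic_wdens p k 1 k (- INR p) (- k)));
  [apply ex_RInt_m11_cubic_wdens|apply is_RInt_m11_cubic_wdens|].
apply (is_RInt_m11_derive _ (fun t => t * ((1 - t ^ 2) * wdens p k t)) (exp k)).
- apply continuous_m11_poly_wdens. intros; auto_derive; auto.
- intros t Ht. pose proof (one_minus_sq_bounds t Ht).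
  unfold cubic_wdens, wdens, Rpower. auto_derive; [lra|].
  replace (1 + - (t * (t * 1))) with (1 - t ^ 2) by ring. field. lra.
- intros t Ht. pose proof (Rabs_one_minus_sq_wdens_le t Ht).
  assert (Rabs t <= 1) by (apply Rabs_le; lra).
  rewrite Rabs_mult. pose proof (Rabs_pos ((1 - t ^ 2) * wdens p k t)). nra.
Qed.

Lemma moment0_add2 : moment (p + 2) k 0 = moment p k 0 - moment p k 2.
Proof.
unfold moment at 1. rewrite (Int_m11_cubic_wdens _ 1 0 (-1) 0); [ring|].
intros t Ht. unfold cubic_wdens. rewrite wdens_add2 by auto. ring.
Qed.

Lemma moment1_add2 : moment (p + 2) k 1 = moment p k 1 - moment p k 3.
Proof.
unfold moment at 1. rewrite (Int_m11_cubic_wdens _ 0 1 0 (-1)); [ring|].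
intros t Ht. unfold cubic_wdens. rewrite wdens_add2 by auto. ring.
Qed.

End Moments.

Section Identities.

Variables (p : nat) (k : R).
Hypotheses (Hp : (3 <= p)%nat) (Hk : 0 < k).

Lemma e1_moments : e1 p k = moment p k 1 / moment p k 0.
Proof.
pose proof (moment0_pos p k Hp Hk).
unfold e1, c_pk.
rewrite (Int_m11_cubic_wdens p k Hp Hk (wdens p k) 1 0 0 0),
  (Int_m11_cubic_wdens p k Hp Hk _ 0 1 0 0) by (intros; unfold cubic_wdens; ring).
field. lra.
Qed.

Lemma m2_moments : m2 p k = moment p k 2 / moment p k 0.
Proof.
pose proof (moment0_pos p k Hp Hk).
unfold m2, c_pk.
rewrite (Int_m11_cubic_wdens p k Hp Hk (wdens p k) 1 0 0 0),
  (Int_m11_cubic_wdens p k Hp Hk _ 0 0 1 0) by (intros; unfold cubic_wdens; ring).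
field. lra.
Qed.

Lemma f2_moments : f2 p k = 1 - moment p k 2 / moment p k 0.
Proof.
pose proof (moment0_pos p k Hp Hk).
unfold f2, c_pk.
rewrite (Int_m11_cubic_wdens p k Hp Hk (wdens p k) 1 0 0 0),
  (Int_m11_cubic_wdens p k Hp Hk _ 1 0 (-1) 0) by (intros; unfold cubic_wdens; ring).
field. lra.
Qed.

Lemma f2_e1 : f2 p k = (INR p - 1) * e1 p k / k.
Proof.
pose proof (moment0_pos p k Hp Hk). pose proof (moment_ibp1 p k Hp Hk).
rewrite f2_moments, e1_moments.
apply Rmult_eq_reg_r with (k * moment p k 0); [|nra].
field_simplify; [lra|lra|lra].
Qed.

Lemma e2t_e1 : e2t p k = 1 - e1 p k ^ 2 - (INR p - 1) * e1 p k / k.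
Proof. pose proof f2_moments. pose proof f2_e1. unfold e2t. rewrite m2_moments. lra. Qed.

Lemma e2t_ge0 : 0 <= e2t p k.
Proof.
pose proof (moment0_pos p k Hp Hk).
pose proof (moment_var_ge0 p k Hp Hk (moment p k 1 / moment p k 0)).
unfold e2t. rewrite m2_moments, e1_moments.
replace (moment p k 2 / moment p k 0 - (moment p k 1 / moment p k 0) ^ 2) with
  (((moment p k 1 / moment p k 0) ^ 2 * moment p k 0
    - 2 * (moment p k 1 / moment p k 0) * moment p k 1 + moment p k 2) / moment p k 0)
  by (field; lra).
apply Rdiv_le_0_compat; lra.
Qed.

Lemma e1_ge0 : 0 <= e1 p k.
Proof.
pose proof (moment0_pos p k Hp Hk). pose proof (moment_ibp1 p k Hp Hk).
pose proof (moment0_pos (p + 2) k ltac:(lia) Hk). rewrite moment0_add2 in * by auto.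
pose proof (INR_ge3 p Hp).
rewrite e1_moments. apply Rdiv_le_0_compat; nra.
Qed.

End Identities.

Lemma e1_rec p k : (3 <= p)%nat -> 0 < k -> e1 p k * (INR p + k * e1 (p + 2) k) = k.
Proof.
intros Hp Hk.
pose proof (moment0_pos p k Hp Hk). pose proof (moment0_pos (p + 2) k ltac:(lia) Hk).
pose proof (moment_ibp1 p k Hp Hk) as Hibp1. pose proof (moment_ibp2 p k Hp Hk) as Hibp2.
rewrite !e1_moments by (auto; lia). rewrite moment0_add2, moment1_add2 in * by auto.
set (M0 := moment p k 0) in *. set (M1 := moment p k 1) in *.
set (M2 := moment p k 2) in *. set (M3 := moment p k 3) in *.
replace (k * ((M1 - M3) / (M0 - M2))) with (k * (M1 - M3) / (M0 - M2)) by (field; lra).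
replace (k * (M1 - M3)) with (INR p * M2 - M0) by lra.
replace (M1 / M0 * (INR p + (INR p * M2 - M0) / (M0 - M2))) with
  ((INR p - 1) * M1 / (M0 - M2)) by (field; lra).
replace ((INR p - 1) * M1) with (k * (M0 - M2)) by lra. field. lra.
Qed.

Section Bounds.

Variables (p : nat) (k : R).
Hypotheses (Hp : (3 <= p)%nat) (Hk : 0 < k).

Lemma e1_le1 : e1 p k <= 1.
Proof.
pose proof (e2t_e1 p k Hp Hk). pose proof (e2t_ge0 p k Hp Hk).
pose proof (e1_ge0 p k Hp Hk). pose proof (INR_ge3 p Hp).
assert (0 <= (INR p - 1) * e1 p k / k) by (apply Rdiv_le_0_compat; nra). nra.
Qed.

Lemma e1_add2_le : e1 (p + 2) k <= k / (INR p + 1).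
Proof.
pose proof (e2t_e1 (p + 2) k ltac:(lia) Hk). pose proof (e2t_ge0 (p + 2) k ltac:(lia) Hk).
pose proof (e1_ge0 (p + 2) k ltac:(lia) Hk). pose proof (INR_ge3 p Hp).
rewrite plus_INR in *. simpl INR in *.
apply Rmult_le_reg_r with ((INR p + 1) / k); [apply Rdiv_lt_0_compat; lra|].
replace (k / (INR p + 1) * ((INR p + 1) / k)) with 1 by (field; lra).
replace (e1 (p + 2) k * ((INR p + 1) / k)) with ((INR p + 1 + 1 - 1) * e1 (p + 2) k / k)
  by (field; lra).
nra.
Qed.

Lemma k_e1_add2_le : k * e1 (p + 2) k <= INR p * (k / INR p) ^ 2.
Proof.
pose proof e1_add2_le. pose proof (INR_ge3 p Hp).
apply Rle_trans with (k * (k / (INR p + 1))); [apply Rmult_le_compat_l; lra|].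
apply Rmult_le_reg_r with (INR p * (INR p + 1)); [nra|].
replace (k * (k / (INR p + 1)) * (INR p * (INR p + 1))) with (k ^ 2 * INR p) by (field; lra).
replace (INR p * (k / INR p) ^ 2 * (INR p * (INR p + 1))) with (k ^ 2 * (INR p + 1))
  by (field; lra).
nra.
Qed.

Lemma e1_denom_pos : 0 < INR p + k * e1 (p + 2) k.
Proof. pose proof (INR_ge3 p Hp). pose proof (e1_ge0 (p + 2) k ltac:(lia) Hk). nra. Qed.

Lemma e1_rec_div : e1 p k = k / (INR p + k * e1 (p + 2) k).
Proof.
pose proof e1_denom_pos. apply (Rmult_eq_reg_r (INR p + k * e1 (p + 2) k)); [|lra].
rewrite e1_rec by auto. field. lra.
Qed.

Lemma f2_rec_div : f2 p k = (INR p - 1) / (INR p + k * e1 (p + 2) k).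
Proof. pose proof e1_denom_pos. rewrite f2_e1, e1_rec_div by auto. field. lra. Qed.

Lemma e2t_rec : e2t p k = (INR p - k ^ 2 * e2t (p + 2) k) / (INR p + k * e1 (p + 2) k) ^ 2.
Proof.
pose proof e1_denom_pos.
rewrite (e2t_e1 p k Hp Hk), (e2t_e1 (p + 2) k ltac:(lia) Hk), e1_rec_div, plus_INR. simpl INR.
field. lra.
Qed.

Lemma e2t_le_inv : e2t p k <= 1 / INR p.
Proof.
pose proof e1_denom_pos. pose proof (INR_ge3 p Hp).
assert (0 <= k ^ 2 * e2t (p + 2) k)
  by (apply Rmult_le_pos; [apply pow2_ge_0|apply e2t_ge0; [lia|lra]]).
assert (0 <= k * e1 (p + 2) k) by (apply Rmult_le_pos; [lra|apply e1_ge0; [lia|lra]]).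
rewrite e2t_rec. set (D := INR p + k * e1 (p + 2) k) in *.
apply Rle_trans with (INR p / D ^ 2).
- apply Rmult_le_compat_r; [apply Rlt_le, Rinv_0_lt_compat, pow_lt|]; lra.
- apply Rmult_le_reg_r with (D ^ 2 * INR p); [apply Rmult_lt_0_compat; [apply pow_lt|]; lra|].
  replace (INR p / D ^ 2 * (D ^ 2 * INR p)) with (INR p * INR p) by (field; lra).
  replace (1 / INR p * (D ^ 2 * INR p)) with (D ^ 2) by (field; lra).
  unfold D. nra.
Qed.

End Bounds.

(* The positive root of [k x^2 + c x - k]. *)
Definition qroot (c k : R) : R := 2 * k / (c + sqrt (c ^ 2 + 4 * k ^ 2)).

Lemma qroot_pos c k : 0 < c -> 0 < k -> 0 < qroot c k.
Proof.
intros Hc Hk. unfold qroot. pose proof (sqrt_pos (c ^ 2 + 4 * k ^ 2)).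
apply Rdiv_lt_0_compat; lra.
Qed.

Lemma le_qroot x c k : 0 <= x -> 0 <= c -> 0 < k -> x ^ 2 + c * x / k <= 1 -> x <= qroot c k.
Proof.
intros Hx Hc Hk H. unfold qroot.
assert (Hs0 : 0 <= c ^ 2 + 4 * k ^ 2) by nra.
pose proof (sqrt_sqrt _ Hs0) as Hss.
assert (0 < sqrt (c ^ 2 + 4 * k ^ 2)) by (apply sqrt_lt_R0; nra).
set (s := sqrt (c ^ 2 + 4 * k ^ 2)) in *.
apply Rmult_le_reg_r with (c + s); [lra|].
replace (2 * k / (c + s) * (c + s)) with (2 * k) by (field; lra).
assert (Hq : k * x ^ 2 + c * x - k <= 0).
{ replace (k * x ^ 2 + c * x - k) with (k * (x ^ 2 + c * x / k - 1)) by (field; lra). nra. }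
(* This factorisation exhibits the root [2 k / (c + s)]; the other root is negative. *)
assert (E : (x * (c + s) - 2 * k) * (k * x + (c + s) / 2) = (c + s) * (k * x ^ 2 + c * x - k))
  by nra.
apply Rnot_lt_le. intros Hlt.
assert (0 < (x * (c + s) - 2 * k) * (k * x + (c + s) / 2)) by (apply Rmult_lt_0_compat; nra).
nra.
Qed.

Lemma qroot_scale c k P : 0 < P -> 0 < c -> qroot c k = qroot (c / P) (k / P).
Proof.
intros HP Hc. unfold qroot.
replace ((c / P) ^ 2 + 4 * (k / P) ^ 2) with ((c ^ 2 + 4 * k ^ 2) * (/ P) ^ 2) by (field; lra).
assert (0 <= c ^ 2 + 4 * k ^ 2) by nra.
rewrite sqrt_mult, sqrt_pow2 by (auto; try apply pow_le; apply Rlt_le, Rinv_0_lt_compat; lra).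
pose proof (sqrt_pos (c ^ 2 + 4 * k ^ 2)).
field. split; lra.
Qed.

Lemma is_lim_seq_qroot (c k : nat -> R) (c0 k0 : R) :
  is_lim_seq c c0 -> is_lim_seq k k0 -> 0 < c0 ->
  is_lim_seq (fun n => qroot (c n) (k n)) (qroot c0 k0).
Proof.
intros Hc Hk Hc0. unfold qroot.
assert (Hsq : forall (u : nat -> R) (l : R), is_lim_seq u l -> is_lim_seq (fun n => u n ^ 2) (l ^ 2)).
{ intros u l Hu. apply (is_lim_seq_ext (fun n => u n * u n)); [intros; ring|].
  replace (l ^ 2) with (l * l) by ring. exact (is_lim_seq_mult' u u l l Hu Hu). }
assert (Hs : is_lim_seq (fun n => sqrt (c n ^ 2 + 4 * k n ^ 2)) (sqrt (c0 ^ 2 + 4 * k0 ^ 2))).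
{ apply (is_lim_seq_continuous sqrt); [apply continuity_pt_sqrt; nra|].
  apply is_lim_seq_plus'; [auto|]. apply (is_lim_seq_scal_l _ 4 (k0 ^ 2)). auto. }
pose proof (sqrt_pos (c0 ^ 2 + 4 * k0 ^ 2)).
apply is_lim_seq_div'; [apply (is_lim_seq_scal_l _ 2 k0); auto|apply is_lim_seq_plus'; auto|lra].
Qed.

Lemma qroot_1 xi : 0 < xi -> qroot 1 xi = xi / (1 / 2 + sqrt (1 / 4 + xi ^ 2)).
Proof.
intros Hxi. unfold qroot.
replace (1 ^ 2 + 4 * xi ^ 2) with (2 ^ 2 * (1 / 4 + xi ^ 2)) by field.
rewrite sqrt_mult, sqrt_pow2 by (try apply pow_le; nra).
pose proof (sqrt_pos (1 / 4 + xi ^ 2)). field. lra.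
Qed.

(* [c_xi] solves [c^2 = c + xi^2]. *)
Lemma qroot_1_fixpoint xi : 0 < xi ->
  xi / (1 + xi * qroot 1 xi) = qroot 1 xi.
Proof.
intros Hxi. rewrite qroot_1 by auto.
assert (H0 : 0 <= 1 / 4 + xi ^ 2) by nra.
pose proof (sqrt_pos (1 / 4 + xi ^ 2)). pose proof (sqrt_sqrt _ H0).
field_simplify_eq; [nra|split; nra].
Qed.

Section Estimates.

Variables (p : nat) (k : R).
Hypotheses (Hp : (3 <= p)%nat) (Hk : 0 < k).

Lemma Rabs_e1_sub_ratio_le : Rabs (e1 p k - k / INR p) <= (k / INR p) ^ 3.
Proof.
pose proof (e1_denom_pos p k Hp Hk). pose proof (INR_ge3 p Hp). pose proof (k_e1_add2_le p k Hp Hk).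
assert (0 <= k * e1 (p + 2) k) by (apply Rmult_le_pos; [lra|apply e1_ge0; [lia|lra]]).
rewrite (e1_rec_div p k Hp Hk). set (P := INR p) in *. set (kB := k * e1 (p + 2) k) in *.
replace (k / (P + kB) - k / P) with (- (k * kB / (P * (P + kB)))) by (field; lra).
rewrite Rabs_Ropp, Rabs_right by (apply Rle_ge, Rdiv_le_0_compat; nra).
apply Rle_trans with (k * kB / (P * P)).
- apply Rmult_le_compat_l; [nra|apply Rinv_le_contravar; nra].
- replace ((k / P) ^ 3) with (k * (P * (k / P) ^ 2) / (P * P)) by (field; lra).
  apply Rmult_le_compat_r; [apply Rlt_le, Rinv_0_lt_compat; nra|].
  apply Rmult_le_compat_l; lra.
Qed.

Lemma k2_e2t_add2_le : k ^ 2 * e2t (p + 2) k <= INR p * (k / INR p) ^ 2.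
Proof.
pose proof (INR_ge3 p Hp). pose proof (e2t_le_inv (p + 2) k ltac:(lia) Hk).
rewrite plus_INR in *. simpl INR in *.
apply Rle_trans with (k ^ 2 * (1 / (INR p + (1 + 1)))); [apply Rmult_le_compat_l; nra|].
apply Rmult_le_reg_r with (INR p * (INR p + 2)); [nra|].
replace (k ^ 2 * (1 / (INR p + (1 + 1))) * (INR p * (INR p + 2))) with (k ^ 2 * INR p)
  by (field; lra).
replace (INR p * (k / INR p) ^ 2 * (INR p * (INR p + 2))) with (k ^ 2 * (INR p + 2))
  by (field; lra).
nra.
Qed.

Lemma e2t_mul_ge : 1 - 3 * (k / INR p) ^ 2 <= e2t p k * INR p.
Proof.
pose proof (e1_denom_pos p k Hp Hk). pose proof (INR_ge3 p Hp). pose proof (k_e1_add2_le p k Hp Hk).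
pose proof k2_e2t_add2_le. pose proof (e2t_rec p k Hp Hk) as Hrec.
assert (0 <= k * e1 (p + 2) k) by (apply Rmult_le_pos; [lra|apply e1_ge0; [lia|lra]]).
assert (0 <= e2t p k * INR p) by (apply Rmult_le_pos; [apply e2t_ge0; auto|lra]).
set (X := e2t p k * INR p) in *. set (D := INR p + k * e1 (p + 2) k) in *.
set (P := INR p) in *. set (r := k / P) in *.
assert (Hr : 0 < r) by (unfold r; apply Rdiv_lt_0_compat; lra).
destruct (Rle_or_lt (1 / 3) (r ^ 2)) as [Hbig|Hsmall]; [lra|].
(* [X D^2 >= P^2 (1 - r^2)] and [D <= P (1 + r^2)], while [(1 - 3 r^2) (1 + r^2)^2 <= 1 - r^2]. *)
assert (HX : X * D ^ 2 >= P ^ 2 * (1 - r ^ 2)).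
{ replace (X * D ^ 2) with (P * (P - k ^ 2 * e2t (p + 2) k)) by (unfold X; rewrite Hrec; field; lra).
  nra. }
apply Rnot_lt_le. intros HXl.
assert (D ^ 2 <= (P + P * r ^ 2) ^ 2) by (apply pow_incr; unfold D; lra).
assert (X * D ^ 2 <= X * (P + P * r ^ 2) ^ 2) by (apply Rmult_le_compat_l; lra).
assert (X * (P + P * r ^ 2) ^ 2 < (1 - 3 * r ^ 2) * (P + P * r ^ 2) ^ 2)
  by (apply Rmult_lt_compat_r; [apply pow_lt; nra|auto]).
assert ((1 - 3 * r ^ 2) * (P + P * r ^ 2) ^ 2 <= P ^ 2 * (1 - r ^ 2)).
{ replace ((1 - 3 * r ^ 2) * (P + P * r ^ 2) ^ 2)
    with (P ^ 2 * (1 - r ^ 2 - (5 * r ^ 4 + 3 * r ^ 6))) by ring.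
  apply Rmult_le_compat_l; [nra|].
  pose proof (pow_le r 4 (Rlt_le _ _ Hr)). pose proof (pow_le r 6 (Rlt_le _ _ Hr)). lra. }
lra.
Qed.

Lemma Rabs_e2t_sub_inv_le :
  Rabs (e2t p k - 1 / INR p) <= 3 * (k / INR p) ^ 2 * (1 / INR p).
Proof.
pose proof (INR_ge3 p Hp). pose proof (e2t_le_inv p k Hp Hk). pose proof e2t_mul_ge.
rewrite Rabs_left1 by lra.
apply Rmult_le_reg_r with (INR p); [lra|].
replace (- (e2t p k - 1 / INR p) * INR p) with (1 - e2t p k * INR p) by (field; lra).
replace (3 * (k / INR p) ^ 2 * (1 / INR p) * INR p) with (3 * (k / INR p) ^ 2) by (field; lra).
lra.
Qed.

Lemma Rabs_f2_sub1_le : Rabs (f2 p k - 1) <= 1 / INR p + (k / INR p) ^ 2.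
Proof.
pose proof (e1_denom_pos p k Hp Hk). pose proof (INR_ge3 p Hp). pose proof (k_e1_add2_le p k Hp Hk).
assert (0 <= k * e1 (p + 2) k) by (apply Rmult_le_pos; [lra|apply e1_ge0; [lia|lra]]).
rewrite (f2_rec_div p k Hp Hk).
set (D := INR p + k * e1 (p + 2) k) in *. set (P := INR p) in *. set (r := k / P) in *.
assert (HD : P <= D <= P + P * r ^ 2) by (unfold D; lra).
assert (Hup : (P - 1) / D <= 1).
{ apply Rmult_le_reg_r with D; [lra|]. replace ((P - 1) / D * D) with (P - 1) by (field; lra).
  lra. }
assert (Hlow : 1 - 1 / P - r ^ 2 <= (P - 1) / D).
{ apply Rmult_le_reg_r with (P * D); [nra|].
  replace ((P - 1) / D * (P * D)) with (P * (P - 1)) by (field; lra).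
  replace ((1 - 1 / P - r ^ 2) * (P * D)) with ((P - 1 - P * r ^ 2) * D) by (field; lra).
  destruct (Rle_or_lt (P - 1 - P * r ^ 2) 0).
  - assert (0 <= - (P - 1 - P * r ^ 2) * D) by (apply Rmult_le_pos; lra). nra.
  - apply Rle_trans with ((P - 1 - P * r ^ 2) * (P + P * r ^ 2)); [apply Rmult_le_compat_l; lra|].
    assert (0 <= P ^ 2 * r ^ 4) by (apply Rmult_le_pos; [nra|apply pow_le; unfold r;
      apply Rlt_le, Rdiv_lt_0_compat; lra]).
    nra. }
rewrite Rabs_left1 by lra. lra.
Qed.

Lemma Rabs_e1_sub1_le : Rabs (e1 p k - 1) <= INR p / k.
Proof.
pose proof (e1_le1 p k Hp Hk). pose proof (e1_le1 (p + 2) k ltac:(lia) Hk).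
pose proof (e1_ge0 p k Hp Hk). pose proof (e1_rec p k Hp Hk). pose proof (INR_ge3 p Hp).
rewrite Rabs_left1 by lra.
apply Rmult_le_reg_r with k; [lra|]. replace (INR p / k * k) with (INR p) by (field; lra).
assert (0 <= e1 p k * k * (1 - e1 (p + 2) k)) by (apply Rmult_le_pos; [apply Rmult_le_pos|]; lra).
nra.
Qed.

Lemma e2t_le_large : INR p + 2 <= k -> e2t p k <= 4 * (INR p / k ^ 2).
Proof.
intros Hlarge. pose proof (INR_ge3 p Hp).
pose proof (e1_rec (p + 2) k ltac:(lia) Hk) as Hrec2. rewrite plus_INR in Hrec2. simpl INR in Hrec2.
pose proof (e1_le1 (p + 2 + 2) k ltac:(lia) Hk).
pose proof (e1_ge0 (p + 2) k ltac:(lia) Hk). pose proof (e1_ge0 (p + 2 + 2) k ltac:(lia) Hk).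
assert (0 <= e1 (p + 2) k * k * (1 - e1 (p + 2 + 2) k))
  by (apply Rmult_le_pos; [apply Rmult_le_pos|]; lra).
assert (e1 (p + 2) k * (INR p + (1 + 1)) <= e1 (p + 2) k * k) by (apply Rmult_le_compat_l; lra).
assert (HB : 1 / 2 <= e1 (p + 2) k) by nra.
pose proof (e2t_ge0 (p + 2) k ltac:(lia) Hk). pose proof (e1_denom_pos p k Hp Hk).
assert (0 <= k ^ 2 * e2t (p + 2) k) by (apply Rmult_le_pos; [apply pow2_ge_0|lra]).
rewrite (e2t_rec p k Hp Hk). set (D := INR p + k * e1 (p + 2) k) in *.
assert (HD : k / 2 <= D) by (unfold D; nra).
apply Rle_trans with (INR p / D ^ 2).
- apply Rmult_le_compat_r; [apply Rlt_le, Rinv_0_lt_compat, pow_lt|]; lra.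
- apply Rmult_le_reg_r with (D ^ 2 * k ^ 2); [apply Rmult_lt_0_compat; apply pow_lt; lra|].
  replace (INR p / D ^ 2 * (D ^ 2 * k ^ 2)) with (INR p * k ^ 2) by (field; lra).
  replace (4 * (INR p / k ^ 2) * (D ^ 2 * k ^ 2)) with (4 * INR p * D ^ 2) by (field; lra).
  assert (k ^ 2 <= 4 * D ^ 2) by nra. nra.
Qed.

Lemma Rabs_f2_sub_ratio_le :
  Rabs (f2 p k - INR p / k) <= INR p / k * (INR p / k + 1 / INR p).
Proof.
pose proof Rabs_e1_sub1_le. pose proof (e1_le1 p k Hp Hk). pose proof (e1_ge0 p k Hp Hk).
pose proof (INR_ge3 p Hp).
rewrite (f2_e1 p k Hp Hk). set (A := e1 p k) in *. set (P := INR p) in *.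
replace ((P - 1) * A / k - P / k) with ((P * (A - 1) - A) / k) by (field; lra).
rewrite Rabs_div, (Rabs_right k) by lra.
apply Rmult_le_reg_r with k; [lra|].
replace (Rabs (P * (A - 1) - A) / k * k) with (Rabs (P * (A - 1) - A)) by (field; lra).
replace (P / k * (P / k + 1 / P) * k) with (P * (P / k) + 1) by (field; lra).
eapply Rle_trans; [apply Rabs_triang|].
rewrite Rabs_Ropp, Rabs_mult, (Rabs_right P), (Rabs_right A) by lra.
assert (P * Rabs (A - 1) <= P * (P / k)) by (apply Rmult_le_compat_l; lra). lra.
Qed.

Lemma e1_qroot_bounds :
  k / (INR p + k * qroot (INR p + 1) k) <= e1 p k <= qroot (INR p - 1) k.
Proof.
pose proof (INR_ge3 p Hp). pose proof (e1_ge0 p k Hp Hk).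
pose proof (e1_ge0 (p + 2) k ltac:(lia) Hk).
pose proof (e2t_e1 p k Hp Hk). pose proof (e2t_ge0 p k Hp Hk).
pose proof (e2t_e1 (p + 2) k ltac:(lia) Hk). pose proof (e2t_ge0 (p + 2) k ltac:(lia) Hk).
rewrite plus_INR in *. simpl INR in *.
assert (HB : e1 (p + 2) k <= qroot (INR p + 1) k) by (apply le_qroot; lra).
split; [|apply le_qroot; lra].
rewrite (e1_rec_div p k Hp Hk). pose proof (qroot_pos (INR p + 1) k ltac:(lra) Hk).
pose proof (e1_denom_pos p k Hp Hk).
assert (0 < INR p + k * qroot (INR p + 1) k) by nra.
apply Rmult_le_compat_l; [lra|]. apply Rinv_le_contravar; [lra|].
apply Rplus_le_compat_l, Rmult_le_compat_l; lra.
Qed.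

End Estimates.

Lemma filterlim_nat_diverges (p : nat -> nat) :
  nat_diverges p -> filterlim p eventually eventually.
Proof.
intros Hd P [N HN]. destruct (Hd N) as [M HM]. exists M. intros n Hn. apply HN, HM, Hn.
Qed.

Lemma is_lim_seq_inv_INR (p : nat -> nat) :
  nat_diverges p -> is_lim_seq (fun n => 1 / INR (p n)) 0.
Proof.
intros Hd.
apply (is_lim_seq_ext (fun n => / INR (p n))); [intros; unfold Rdiv; ring|].
replace (Finite 0) with (Rbar_inv p_infty) by reflexivity.
apply is_lim_seq_inv; [|discriminate].
exact (filterlim_comp _ _ _ p INR _ _ _ (filterlim_nat_diverges p Hd) is_lim_seq_INR).
Qed.

Lemma littleo_of_le (u v w : nat -> R) : is_lim_seq w 0 ->
  eventually (fun n => Rabs (u n) <= w n * Rabs (v n)) -> littleo u v.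
Proof.
intros Hw Hb eps Heps. apply is_lim_seq_spec in Hw.
destruct (filter_and _ _ (Hw (mkposreal eps Heps)) Hb) as [N HN].
exists N. intros n Hn. destruct (HN n Hn) as [H1 H2]. simpl in H1. rewrite Rminus_0_r in H1.
pose proof (Rle_abs (w n)). pose proof (Rabs_pos (v n)).
eapply Rle_trans; [exact H2|]. apply Rmult_le_compat_r; lra.
Qed.

Lemma Un_cv_of_le (u w : nat -> R) (l : R) : is_lim_seq w 0 ->
  eventually (fun n => Rabs (u n - l) <= w n) -> Un_cv u l.
Proof.
intros Hw Hb. apply is_lim_seq_Reals, is_lim_seq_spec. intros eps.
apply is_lim_seq_spec in Hw.
apply (filter_imp (fun n => Rabs (w n - 0) < eps /\ Rabs (u n - l) <= w n));
  [|apply filter_and; auto].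
intros n [H1 H2]. rewrite Rminus_0_r in H1. pose proof (Rle_abs (w n)). lra.
Qed.

Section Asymptotics.

Variables (p : nat -> nat) (kappa : nat -> R).
Hypotheses (Hpinf : nat_diverges p) (Hk : forall n, 0 < kappa n).

Let Hp3 : eventually (fun n => (3 <= p n)%nat).
Proof. destruct (Hpinf 3%nat) as [N HN]. exists N. exact HN. Qed.

Lemma asymptotics_ratio_to_infty :
  cv_infty (fun n => kappa n / INR (p n)) ->
  littleo (fun n => e1 (p n) (kappa n) - 1) (fun _ => 1)
  /\ bigO (fun n => e2t (p n) (kappa n)) (fun n => INR (p n) / kappa n ^ 2)
  /\ littleo (fun n => f2 (p n) (kappa n) - INR (p n) / kappa n)
             (fun n => INR (p n) / kappa n).
Proof.
intros Hinf.
assert (Hw : is_lim_seq (fun n => INR (p n) / kappa n) 0).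
{ apply (is_lim_seq_ext_loc (fun n => / (kappa n / INR (p n)))).
  - apply (filter_imp (fun n => (3 <= p n)%nat)); [|exact Hp3].
    intros n Hn. pose proof (INR_ge3 _ Hn). pose proof (Hk n). field. lra.
  - replace (Finite 0) with (Rbar_inv p_infty) by reflexivity.
    apply is_lim_seq_inv; [apply is_lim_seq_spec; exact Hinf|discriminate]. }
split; [|split].
- apply (littleo_of_le _ _ _ Hw), (filter_imp (fun n => (3 <= p n)%nat)); [|exact Hp3].
  intros n Hn. rewrite Rabs_R1, Rmult_1_r. apply Rabs_e1_sub1_le; auto.
- exists 4.
  apply (filter_imp (F := eventually) (fun n => (3 <= p n)%nat /\ 3 < kappa n / INR (p n)));
    [|apply filter_and; [exact Hp3|exact (Hinf 3)]].
  intros n [Hn Hr]. pose proof (INR_ge3 _ Hn). pose proof (Hk n).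
  assert (3 * INR (p n) < kappa n).
  { apply Rmult_lt_reg_r with (/ INR (p n)); [apply Rinv_0_lt_compat; lra|].
    replace (3 * INR (p n) * / INR (p n)) with 3 by (field; lra). exact Hr. }
  pose proof (e2t_le_large (p n) (kappa n) Hn (Hk n) ltac:(lra)).
  pose proof (e2t_ge0 (p n) (kappa n) Hn (Hk n)).
  assert (0 <= INR (p n) / kappa n ^ 2) by (apply Rdiv_le_0_compat; [|apply pow_lt]; lra).
  rewrite !Rabs_right; lra.
- apply (littleo_of_le _ _ (fun n => INR (p n) / kappa n + 1 / INR (p n))).
  + rewrite <- (Rplus_0_r 0). apply is_lim_seq_plus'; [exact Hw|apply is_lim_seq_inv_INR, Hpinf].
  + apply (filter_imp (fun n => (3 <= p n)%nat)); [|exact Hp3].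
    intros n Hn. pose proof (INR_ge3 _ Hn). pose proof (Hk n).
    rewrite (Rabs_right (INR (p n) / kappa n)) by (apply Rle_ge, Rdiv_le_0_compat; lra).
    rewrite Rmult_comm. apply Rabs_f2_sub_ratio_le; auto.
Qed.


Lemma is_lim_seq_shift_ratio a : is_lim_seq (fun n => (INR (p n) + a) / INR (p n)) 1.
Proof.
apply (is_lim_seq_ext_loc (fun n => 1 + a * (1 / INR (p n)))).
- apply (filter_imp (fun n => (3 <= p n)%nat)); [|exact Hp3].
  intros n Hn. pose proof (INR_ge3 _ Hn). field. lra.
- replace (Finite 1) with (Finite (1 + a * 0)) by (f_equal; ring).
  apply is_lim_seq_plus'; [apply is_lim_seq_const|].
  apply is_lim_seq_mult'; [apply is_lim_seq_const|apply is_lim_seq_inv_INR, Hpinf].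
Qed.

Lemma is_lim_seq_e1_ratio_pos xi : 0 < xi ->
  is_lim_seq (fun n => kappa n / INR (p n)) xi ->
  is_lim_seq (fun n => e1 (p n) (kappa n)) (qroot 1 xi).
Proof.
intros Hxi Hr. pose proof (qroot_pos 1 xi ltac:(lra) Hxi).
apply (is_lim_seq_le_le_loc
  (fun n => kappa n / (INR (p n) + kappa n * qroot (INR (p n) + 1) (kappa n)))
  _ (fun n => qroot (INR (p n) - 1) (kappa n))).
- apply (filter_imp (fun n => (3 <= p n)%nat)); [|exact Hp3].
  intros n Hn. apply e1_qroot_bounds; auto.
- rewrite <- (qroot_1_fixpoint xi Hxi).
  apply (is_lim_seq_ext_loc (fun n => kappa n / INR (p n) /
    (1 + kappa n / INR (p n) * qroot ((INR (p n) + 1) / INR (p n)) (kappa n / INR (p n))))).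
  + apply (filter_imp (fun n => (3 <= p n)%nat)); [|exact Hp3].
    intros n Hn. pose proof (INR_ge3 _ Hn). pose proof (Hk n).
    rewrite <- qroot_scale by lra. pose proof (qroot_pos (INR (p n) + 1) (kappa n) ltac:(lra) (Hk n)).
    assert (0 < kappa n * qroot (INR (p n) + 1) (kappa n)) by (apply Rmult_lt_0_compat; lra).
    field. split; apply Rgt_not_eq; lra.
  + apply is_lim_seq_div'; [exact Hr| |nra].
    apply is_lim_seq_plus'; [apply is_lim_seq_const|].
    apply is_lim_seq_mult'; [exact Hr|]. apply is_lim_seq_qroot; [apply is_lim_seq_shift_ratio|exact Hr|lra].
- apply (is_lim_seq_ext_loc (fun n => qroot ((INR (p n) + -1) / INR (p n)) (kappa n / INR (p n)))).
  + apply (filter_imp (fun n => (3 <= p n)%nat)); [|exact Hp3].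
    intros n Hn. pose proof (INR_ge3 _ Hn).
    rewrite (qroot_scale (INR (p n) - 1) (kappa n) (INR (p n))) by lra. replace (INR (p n) + -1) with (INR (p n) - 1) by ring. reflexivity.
  + apply is_lim_seq_qroot; [apply is_lim_seq_shift_ratio|exact Hr|lra].
Qed.

Lemma asymptotics_ratio_to_pos xi : 0 < xi ->
  Un_cv (fun n => kappa n / INR (p n)) xi ->
  let cxi := 1 / 2 + sqrt (1 / 4 + xi ^ 2) in
  Un_cv (fun n => e1 (p n) (kappa n)) (xi / cxi)
  /\ bigO (fun n => e2t (p n) (kappa n)) (fun n => 1 / INR (p n))
  /\ Un_cv (fun n => f2 (p n) (kappa n)) (1 / cxi).
Proof.
intros Hxi Hr cxi. apply is_lim_seq_Reals in Hr.
pose proof (is_lim_seq_e1_ratio_pos xi Hxi Hr) as He1.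
rewrite qroot_1 in He1 by auto. fold cxi in He1.
assert (Hc : 0 < cxi) by (pose proof (sqrt_pos (1 / 4 + xi ^ 2)); unfold cxi; lra).
split; [|split].
- apply is_lim_seq_Reals, He1.
- exists 1. apply (filter_imp (F := eventually) (fun n => (3 <= p n)%nat)); [|exact Hp3].
  intros n Hn. pose proof (INR_ge3 _ Hn).
  pose proof (e2t_le_inv (p n) (kappa n) Hn (Hk n)). pose proof (e2t_ge0 (p n) (kappa n) Hn (Hk n)).
  assert (0 <= 1 / INR (p n)) by (apply Rdiv_le_0_compat; lra).
  rewrite Rmult_1_l, !Rabs_right; lra.
- apply is_lim_seq_Reals.
  replace (1 / cxi) with (1 * (xi / cxi) / xi) by (field; lra).
  apply (is_lim_seq_ext_loc
    (fun n => (INR (p n) + -1) / INR (p n) * e1 (p n) (kappa n) / (kappa n / INR (p n)))).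
  + apply (filter_imp (fun n => (3 <= p n)%nat)); [|exact Hp3].
    intros n Hn. pose proof (INR_ge3 _ Hn). pose proof (Hk n).
    rewrite f2_e1 by auto. field. lra.
  + apply is_lim_seq_div'; [apply is_lim_seq_mult'; [apply is_lim_seq_shift_ratio|exact He1]|exact Hr|lra].
Qed.

Lemma asymptotics_ratio_to_0 :
  Un_cv (fun n => kappa n / INR (p n)) 0 ->
  bigO (fun n => e1 (p n) (kappa n) - kappa n / INR (p n)) (fun n => (kappa n / INR (p n)) ^ 3)
  /\ littleo (fun n => e2t (p n) (kappa n) - 1 / INR (p n)) (fun n => 1 / INR (p n))
  /\ Un_cv (fun n => f2 (p n) (kappa n)) 1.
Proof.
intros Hr. apply is_lim_seq_Reals in Hr.
assert (Hr2 : is_lim_seq (fun n => (kappa n / INR (p n)) ^ 2) 0).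
{ apply (is_lim_seq_ext (fun n => kappa n / INR (p n) * (kappa n / INR (p n)))); [intros; ring|].
  rewrite <- (Rmult_0_r 0). apply is_lim_seq_mult'; exact Hr. }
split; [|split].
- exists 1. apply (filter_imp (F := eventually) (fun n => (3 <= p n)%nat)); [|exact Hp3].
  intros n Hn. pose proof (INR_ge3 _ Hn). pose proof (Hk n).
  assert (0 <= kappa n / INR (p n)) by (apply Rdiv_le_0_compat; lra).
  rewrite Rmult_1_l, (Rabs_right (_ ^ 3)) by (apply Rle_ge, pow_le; lra).
  apply Rabs_e1_sub_ratio_le; auto.
- apply (littleo_of_le _ _ (fun n => 3 * (kappa n / INR (p n)) ^ 2)).
  + rewrite <- (Rmult_0_r 3). apply is_lim_seq_mult'; [apply is_lim_seq_const|exact Hr2].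
  + apply (filter_imp (fun n => (3 <= p n)%nat)); [|exact Hp3].
    intros n Hn. pose proof (INR_ge3 _ Hn).
    rewrite (Rabs_right (1 / INR (p n))) by (apply Rle_ge, Rdiv_le_0_compat; lra).
    apply Rabs_e2t_sub_inv_le; auto.
- apply (Un_cv_of_le _ (fun n => 1 / INR (p n) + (kappa n / INR (p n)) ^ 2)).
  + rewrite <- (Rplus_0_r 0). apply is_lim_seq_plus'; [apply is_lim_seq_inv_INR, Hpinf|exact Hr2].
  + apply (filter_imp (fun n => (3 <= p n)%nat)); [|exact Hp3].
    intros n Hn. apply Rabs_f2_sub1_le; auto.
Qed.

End Asymptotics.

Theorem lemmaA4 (p : nat -> nat) (kappa : nat -> R)
  (Hp2 : forall n, (2 <= p n)%nat)
  (Hpinf : nat_diverges p)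
  (Hk : forall n, 0 < kappa n) :
  (* (i) *)
  (cv_infty (fun n => kappa n / INR (p n)) ->
     littleo (fun n => e1 (p n) (kappa n) - 1) (fun _ => 1)
     /\ bigO (fun n => e2t (p n) (kappa n)) (fun n => INR (p n) / (kappa n) ^ 2)
     /\ littleo (fun n => f2 (p n) (kappa n) - INR (p n) / kappa n)
                (fun n => INR (p n) / kappa n))
  /\
  (* (ii) *)
  (forall xi : R, 0 < xi ->
     Un_cv (fun n => kappa n / INR (p n)) xi ->
     let cxi := 1 / 2 + sqrt (1 / 4 + xi ^ 2) in
     Un_cv (fun n => e1 (p n) (kappa n)) (xi / cxi)
     /\ bigO (fun n => e2t (p n) (kappa n)) (fun n => 1 / INR (p n))
     /\ Un_cv (fun n => f2 (p n) (kappa n)) (1 / cxi))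
  /\
  (* (iii) *)
  (Un_cv (fun n => kappa n / INR (p n)) 0 ->
     bigO (fun n => e1 (p n) (kappa n) - kappa n / INR (p n))
          (fun n => (kappa n / INR (p n)) ^ 3)
     /\ littleo (fun n => e2t (p n) (kappa n) - 1 / INR (p n)) (fun n => 1 / INR (p n))
     /\ Un_cv (fun n => f2 (p n) (kappa n)) 1).
Proof.
split; [|split].
- apply asymptotics_ratio_to_infty; auto.
- apply asymptotics_ratio_to_pos; auto.
- apply asymptotics_ratio_to_0; auto.
Qed.
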